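(* Let $G$ be a clique tree with blocks $B_1,\dots,B_b$, each block having at least $3$ vertices. Then $$Z(G)=\sum_{i=1}^{b} Z(B_i)-\sum_{v\in V(G)}\bigl(bi_G(v)-1\bigr).$$
   Context: A block of a connected graph is a maximal connected subgraph without a cut vertex of its own; a clique tree is a connected graph each of whose blocks is a complete graph. For a vertex $v$, the block index $bi_G(v)$ is the number of blocks of $G$ containing $v$. $Z(\cdot)$ denotes the zero forcing number: with each vertex coloured blue or white, the colour-change rule makes the unique white neighbour of a blue vertex blue (if it has exactly one white neighbour); $Z(G)$ is the minimum size of an initially blue set from which repeated application of the rule turns all vertices blue. For a complete graph, $Z(K_m)=m-1$. *)

(* Simple graph: e : rel T on a finType T (symmetric, irreflexive). *)
From mathcomp Require Import all_boot all_order all_algebra.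
Set Implicit Arguments. Unset Strict Implicit. Unset Printing Implicit Defensive.

Section Graphs.
Variables (T : finType) (e : rel T).

Definition induced_rel (U : {set T}) : rel T :=
  [rel x y | [&& e x y, x \in U & y \in U]].

(* G[U] is connected (the empty graph counts as connected) *)
Definition connectedb (U : {set T}) : bool :=
  [forall x in U, forall y in U, connect (induced_rel U) x y].

Definition nonsep (U : {set T}) : bool :=
  connectedb U && [forall v in U, connectedb (U :\ v)].

Definition is_block (B : {set T}) : bool :=
  [&& B != set0, nonsep B & [forall C : {set T}, (B \proper C) ==> ~~ nonsep C]].

Definition blocks : {set {set T}} := [set B | is_block B].

Definition block_index (v : T) : nat := #|[set B in blocks | v \in B]|.

Definition is_clique (B : {set T}) : bool :=
  [forall x in B, forall y in B, (x != y) ==> e x y].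

Definition clique_tree : Prop :=
  connectedb setT /\ (forall B, B \in blocks -> is_clique B).

(* Zero forcing in G[U]: one (simultaneous) application of the colour-change
   rule to the blue set X: every blue u in X with exactly one white neighbour
   w in G[U] turns w blue. *)
Definition force_step (U X : {set T}) : {set T} :=
  X :|: [set w in U | [exists u in X,
           [set y in U | e u y & y \notin X] == [set w]]].

(* final blue set (derived set) obtained from X: iterate until stable *)
Definition closure (U X : {set T}) : {set T} := iter #|T| (force_step U) X.

Definition zero_forcing_set (U S : {set T}) : bool :=
  (S \subset U) && (U \subset closure U S).

Definition Zf (U : {set T}) : nat :=
  \big[minn/#|U|]_(S : {set T} | zero_forcing_set U S) #|S|.

End Graphs.

(* Since Z(K_m) = m - 1 and the block sizes add up to the block indices, the
   identity amounts to Z(G) = |V(G)| - b, where b is the number of blocks.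
   Lower bound: when u forces w, all vertices of the block containing u and w
   other than w are already blue, because u has no other white neighbour; so
   every force completes a new block, and at most b vertices are ever forced.
   Upper bound: root G at r and call parent of a block its vertex nearest to r;
   every other vertex of the block is one step farther, and a vertex is a
   non-parent in at most one block. Colour white one non-parent vertex w_B per
   block. Going up from the deepest blocks, a third vertex u_B of B (this is
   where |B| >= 3 is needed) has w_B as its only white neighbour: its other
   neighbours lie in B or in the blocks of which u_B is the parent. *)

From Pilot Require Import Defs.
From mathcomp Require Import all_boot all_order all_algebra.
From mathcomp Require Import zify.
Import Order.TTheory GRing.Theory.
Set Implicit Arguments. Unset Strict Implicit. Unset Printing Implicit Defensive.

Section SimpleGraph.
Variables (T : finType) (e : rel T).
Hypothesis esym : symmetric e.
Implicit Types (A B C U V W X S : {set T}).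
Local Notation ir := (induced_rel e).

Lemma induced_rel_sym U : symmetric (ir U).
Proof. by move=> x y; rewrite /induced_rel /= esym [(x \in U) && _]andbC. Qed.

Lemma connect_induced_sym U x y : connect (ir U) x y = connect (ir U) y x.
Proof. exact: (sym_connect_sym (induced_rel_sym U)). Qed.

Lemma connect_induced_sub U V x y :
  U \subset V -> connect (ir U) x y -> connect (ir V) x y.
Proof.
move=> sUV; apply: connect_sub => a b /and3P[eab aU bU]; apply: connect1.
by rewrite /induced_rel /= eab !(subsetP sUV).
Qed.

Lemma connect_induced_edge U x y :
  e x y -> x \in U -> y \in U -> connect (ir U) x y.
Proof. by move=> exy xU yU; apply: connect1; rewrite /induced_rel /= exy xU yU. Qed.

Lemma connectedb_connect U x y :
  connectedb e U -> x \in U -> y \in U -> connect (ir U) x y.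
Proof. by move=> /forall_inP/(_ x) H xU yU; apply: (forall_inP (H xU)). Qed.

Lemma connectedb_to U h :
  (forall x, x \in U -> connect (ir U) x h) -> connectedb e U.
Proof.
move=> toh; apply/forall_inP=> x xU; apply/forall_inP=> y yU.
by apply: connect_trans (toh x xU) _; rewrite connect_induced_sym; apply: toh.
Qed.

Lemma induced_path_sub A a s :
  path (ir A) a s -> s != [::] -> {subset a :: s <= A}.
Proof.
elim: s a => [//|b s IH] a /= /andP[/and3P[_ aA bA] pbs] _ z.
rewrite inE => /predU1P[->//|].
case: s IH pbs => [_ _|c s IH pbs]; first by rewrite inE => /eqP->.
exact: IH pbs isT z.
Qed.

Lemma path_connect_head A a s : path e a s -> {subset a :: s <= A} ->
  {in a :: s, forall z, connect (ir A) a z}.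
Proof.
elim: s a => [|b s IH] a /=; first by move=> _ _ z; rewrite mem_seq1 => /eqP->.
case/andP=> eab pbs sA z; rewrite inE => /predU1P[->//|zs].
apply: connect_trans (IH b pbs _ z zs).
  by apply: connect_induced_edge eab _ _; apply: sA; rewrite !inE eqxx ?orbT.
by move=> t tbs; apply: sA; rewrite inE tbs orbT.
Qed.

Lemma connectedb_setU A C h : connectedb e A -> connectedb e C ->
  h \in A -> h \in C -> connectedb e (A :|: C).
Proof.
move=> cA cC hA hC; apply: (@connectedb_to _ h) => z; rewrite inE => /orP[zA|zC].
  exact: connect_induced_sub (subsetUl A C) (connectedb_connect cA zA hA).
exact: connect_induced_sub (subsetUr A C) (connectedb_connect cC zC hC).
Qed.

Lemma path_connectedb a s : path e a s -> connectedb e [set z in a :: s].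
Proof.
move=> pas; have sA : {subset a :: s <= [set z in a :: s]} by move=> z zs; rewrite in_set.
apply: (@connectedb_to _ a) => z; rewrite inE => zs.
by rewrite connect_induced_sym; apply: path_connect_head pas sA z zs.
Qed.

Lemma cycle_connectedb c : cycle e c -> connectedb e [set z in c].
Proof.
case: c => [|a r] /= car; first by apply/forall_inP=> z; rewrite inE.
have -> : [set z in a :: r] = [set z in a :: rcons r a].
  by apply/setP=> z; rewrite !inE mem_rcons inE orbA orbb.
exact: path_connectedb car.
Qed.

Lemma nonsep_connectedbD1 A v : nonsep e A -> connectedb e (A :\ v).
Proof.
case/andP=> cA /forall_inP/(_ v); case: (boolP (v \in A)) => [_ /(_ isT) //|vA _].
suff -> : A :\ v = A by [].
by apply/setP=> z; rewrite !inE; case: eqVneq => // ->; rewrite (negbTE vA).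
Qed.

Lemma cycle_nonsep c : cycle e c -> uniq c -> nonsep e [set z in c].
Proof.
move=> cc uc; rewrite /nonsep cycle_connectedb //=.
apply/forall_inP=> w; rewrite inE => /rot_to[i r rot_c].
have cwr : cycle e (w :: r) by rewrite -rot_c rot_cycle.
have /andP[wr _] : uniq (w :: r) by rewrite -rot_c rot_uniq.
have -> : [set z in c] :\ w = [set z in r].
  apply/setP=> z; rewrite !inE -(mem_rot i) rot_c inE.
  by case: eqVneq => [->|]; rewrite ?(negbTE wr).
case: r cwr {wr rot_c} => [_|a r]; first by apply/forall_inP=> z; rewrite inE.
by rewrite /= rcons_path => /andP[_ /andP[/path_connectedb]].
Qed.

Lemma nonsep_setU A C x y : nonsep e A -> nonsep e C -> x != y ->
  x \in A -> y \in A -> x \in C -> y \in C -> nonsep e (A :|: C).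
Proof.
move=> nA nC xy xA yA xC yC; have /andP[cA _] := nA; have /andP[cC _] := nC.
rewrite /nonsep (connectedb_setU cA cC xA xC) /=.
apply/forall_inP=> v _; rewrite setDUl.
have [h /and3P[hv hA hC]] : exists h, [&& h != v, h \in A & h \in C].
  by case: (eqVneq x v) => [<-|xv]; [exists y; rewrite eq_sym | exists x]; apply/and3P.
by apply: (@connectedb_setU _ _ h (nonsep_connectedbD1 v nA) (nonsep_connectedbD1 v nC));
  rewrite !inE hv.
Qed.

Lemma nonsep_sub_block W : nonsep e W -> W != set0 ->
  exists2 B, B \in blocks e & W \subset B.
Proof.
move=> nW W0; have nWW : nonsep e W && (W \subset W) by rewrite nW subxx.
have [B /andP[nB sWB] Bmax] :=
  @arg_maxnP _ W (fun C => nonsep e C && (W \subset C)) (fun C => #|C|) nWW.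
exists B => //; rewrite inE /is_block nB (subset_neq0 sWB W0) /=.
apply/forall_inP=> C ltBC; apply/negP=> nC.
have := Bmax C; rewrite nC (subset_trans sWB (proper_sub ltBC)) => /(_ isT) /=.
by rewrite leqNgt proper_card.
Qed.

Lemma eq_block_of_common (B1 B2 : {set T}) x y : B1 \in blocks e -> B2 \in blocks e ->
  x != y -> x \in B1 -> y \in B1 -> x \in B2 -> y \in B2 -> B1 = B2.
Proof.
rewrite !inE => /and3P[_ n1 /forallP max1] /and3P[_ n2 /forallP max2] xy x1 y1 x2 y2.
have nU := nonsep_setU n1 n2 xy x1 y1 x2 y2.
have grow (B : {set T}) : B \subset B1 :|: B2 ->
    ((B \proper B1 :|: B2) ==> ~~ nonsep e (B1 :|: B2)) -> B1 :|: B2 \subset B.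
  by move=> sB; rewrite nU properE sB implybF negbK.
apply/eqP; rewrite eqEsubset.
have := grow B1 (subsetUl _ _) (max1 _); have := grow B2 (subsetUr _ _) (max2 _).
by rewrite !subUset => /andP[-> _] /andP[_ ->].
Qed.

Lemma connectedb_sub_edge U x y :
  e x y -> U \subset [set x; y] -> connectedb e U.
Proof.
move=> exy sU; apply: (@connectedb_to _ (if x \in U then x else y)) => z zU.
have /set2P[zx|zy] := subsetP sU z zU; rewrite ?zx ?zy in zU *.
  by rewrite zU; apply: connect0.
case: ifP => xU; last exact: connect0.
by apply: connect_induced_edge; rewrite // esym.
Qed.

Lemma edge_in_block x y : e x y -> exists2 B, B \in blocks e & (x \in B) && (y \in B).
Proof.
move=> exy; have nxy : nonsep e [set x; y].
  rewrite /nonsep (connectedb_sub_edge exy (subxx _)) /=.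
  by apply/forall_inP=> v _; apply: connectedb_sub_edge exy (subD1set _ _).
have [|B Bb sB] := nonsep_sub_block nxy; first by apply/set0Pn; exists x; rewrite set21.
by exists B; rewrite // !(subsetP sB) ?set21 ?set22.
Qed.

Lemma detour_block v x y : e v x -> e v y -> x != y ->
  connect (ir (~: [set v])) x y ->
  exists2 B, B \in blocks e & [&& v \in B, x \in B & y \in B].
Proof.
move=> evx evy xy /connectP[p0 /shortenP[q pq uq _] yE].
have q0 : q != [::] by apply: contraNneq xy => q0; rewrite yE q0.
have qv := induced_path_sub pq q0.
have vq : v \notin x :: q by apply/negP=> /qv; rewrite !inE eqxx.
have cyc : cycle e (v :: x :: q).
  rewrite /= evx rcons_path -yE esym evy andbT.
  by apply: sub_path pq => a b /andP[].
have uc : uniq (v :: x :: q) by rewrite /= vq.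
have c0 : [set z in v :: x :: q] != set0 by apply/set0Pn; exists v; rewrite inE mem_head.
have [B Bb sB] := nonsep_sub_block (cycle_nonsep cyc uc) c0.
have inB z : z \in v :: x :: q -> z \in B by move=> zc; rewrite (subsetP sB) ?inE.
have xc : x \in v :: x :: q by rewrite in_cons mem_head orbT.
have yc : y \in v :: x :: q by rewrite yE in_cons mem_last orbT.
by exists B; rewrite // !inB ?mem_head.
Qed.

Section Distance.
Variable r : T.
Hypothesis conn : connectedb e setT.

Definition ball k :=
  iter k (fun A : {set T} => A :|: [set y | [exists x in A, e x y]]) [set r].

Lemma ball_edge k x y : x \in ball k -> e x y -> y \in ball k.+1.
Proof.
by move=> xk exy; rewrite /= inE; apply/orP; right; rewrite inE; apply/exists_inP; exists x.
Qed.

Lemma ball_path k a p : a \in ball k -> path e a p -> last a p \in ball (k + size p).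
Proof.
elim: p a k => [|b p IH] a k /=; first by rewrite addn0.
by move=> ak /andP[eab pbp]; rewrite addnS -addSn; apply: IH pbp; apply: ball_edge eab.
Qed.

Lemma ball_exists v : exists k, v \in ball k.
Proof.
have /connectP[p pp ->] := connectedb_connect conn (in_setT r) (in_setT v).
exists (0 + size p); apply: ball_path; first by rewrite inE.
by apply: sub_path pp => a b /andP[].
Qed.

Definition dist v := ex_minn (ball_exists v).

Lemma dist_ball v : v \in ball (dist v).
Proof. by rewrite /dist; case: ex_minnP. Qed.

Lemma dist_min v k : v \in ball k -> dist v <= k.
Proof. by rewrite /dist; case: ex_minnP => m _ /[apply]. Qed.

Lemma dist_root : dist r = 0.
Proof. by apply/eqP; rewrite -leqn0; apply: dist_min; rewrite inE. Qed.

Lemma dist_eq0 v : dist v = 0 -> v = r.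
Proof. by move=> dv; have := dist_ball v; rewrite dv inE => /eqP. Qed.

Lemma dist_edge u v : e u v -> dist v <= (dist u).+1.
Proof. by move=> euv; apply: dist_min; apply: ball_edge euv; apply: dist_ball. Qed.

Lemma dist_pred v : v != r -> exists2 u, e u v & (dist u).+1 = dist v.
Proof.
move=> vr; case dv: (dist v) => [|k]; first by rewrite (dist_eq0 dv) eqxx in vr.
have := dist_ball v; rewrite dv /= inE => /orP[vk|].
  by have := dist_min vk; rewrite dv ltnn.
rewrite inE => /exists_inP[u uk euv]; exists u => //.
by apply/eqP; rewrite eqSS eqn_leq dist_min //= -ltnS -dv dist_edge.
Qed.

Lemma connect_root k v : dist v <= k -> connect (ir [set z | dist z <= k]) v r.
Proof.
elim: {v}(dist v) {-2}v (erefl (dist v)) => [|n IH] v dv vk.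
  by rewrite (dist_eq0 dv); apply: connect0.
have vr : v != r by apply: contra_eqN dv => /eqP->; rewrite dist_root.
have [u euv du] := dist_pred vr.
have uk : dist u <= k by rewrite -ltnS du ltnW.
apply: connect_trans (IH u _ uk).
  by apply: connect_induced_edge; rewrite ?inE // esym.
by apply: succn_inj; rewrite du dv.
Qed.

Lemma dist_below_avoid k v : k < dist v -> [set z | dist z <= k] \subset ~: [set v].
Proof.
move=> kv; apply/subsetP=> z; rewrite !inE; apply: contraTneq => ->.
by rewrite -ltnNge.
Qed.

Lemma connect_avoid k v a b : k < dist v -> dist a <= k -> dist b <= k ->
  connect (ir (~: [set v])) a b.
Proof.
move=> kv ak bk; have low := connect_induced_sub (dist_below_avoid kv).
apply: connect_trans (low _ _ (connect_root ak)) _.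
by rewrite connect_induced_sym low ?connect_root.
Qed.

End Distance.

Section Forcing.
Variable U : {set T}.
Local Notation step := (force_step e U).

Lemma sub_force_step X : X \subset step X.
Proof. exact: subsetUl. Qed.

Lemma closure_fix X : step (Defs.closure e U X) = Defs.closure e U X.
Proof.
rewrite /Defs.closure; apply/eqP/negPn/negP => grows.
have unfixed k : k <= #|T| -> step (iter k step X) != iter k step X.
  move=> kT; apply: contra grows => /eqP fixk.
  by rewrite -(subnK kT) iterD (iter_fix _ fixk) fixk.
have card_iter k : k <= #|T|.+1 -> k <= #|iter k step X|.
  elim: k => // k IH kT; apply: leq_ltn_trans (IH (ltnW kT)) (proper_card _).
  by rewrite properEneq eq_sym unfixed // sub_force_step.
by have := card_iter _ (leqnn _); rewrite ltnNge max_card.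
Qed.

Lemma sub_closure X : X \subset Defs.closure e U X.
Proof.
rewrite /Defs.closure; elim: #|T| => [|k IH] /=; first exact: subxx.
exact: subset_trans IH (sub_force_step _).
Qed.

Lemma closure_id X : step X = X -> Defs.closure e U X = X.
Proof. exact: iter_fix. Qed.

Lemma closure_force X u w : u \in Defs.closure e U X -> w \in U -> e u w ->
  {in U, forall y, e u y -> y != w -> y \in Defs.closure e U X} -> w \in Defs.closure e U X.
Proof.
move=> uX wU euw blue; apply/negPn/negP => wX; move/negP: (wX); apply.
rewrite -closure_fix inE; apply/orP; right; rewrite inE wU /=.
apply/exists_inP; exists u => //; apply/eqP/setP=> y; rewrite !inE.
case: eqVneq => [->|yw]; first by rewrite wU euw wX.
by apply/and3P=> [[yU euy]]; rewrite blue.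
Qed.

End Forcing.

Lemma Zf_min U S : zero_forcing_set e U S -> Zf e U <= #|S|.
Proof. by move=> zS; rewrite /Zf -minEnat; apply: (@bigmin_le_cond _ nat _ _ S _ _ zS). Qed.

Lemma leq_Zf U m :
  m <= #|U| -> (forall S, zero_forcing_set e U S -> m <= #|S|) -> m <= Zf e U.
Proof. by move=> mU mS; rewrite /Zf -minEnat; apply: (@le_bigmin _ nat). Qed.

Lemma Zf_clique B : is_clique e B -> 1 < #|B| -> Zf e B = #|B|.-1.
Proof.
move=> /forall_inP cB B2; have cliq x y : x \in B -> y \in B -> x != y -> e x y.
  by move=> xB /(forall_inP (cB x xB)) /implyP.
apply/eqP; rewrite eqn_leq; apply/andP; split.
  have [x0 x0B] : exists x0, x0 \in B by apply/card_gt0P; apply: ltnW.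
  rewrite (cardsD1 x0 B) x0B; apply: Zf_min; rewrite /zero_forcing_set subD1set /=.
  have [u0 u0B] : exists u0, u0 \in B :\ x0.
    by apply/card_gt0P; move: B2; rewrite (cardsD1 x0 B) x0B.
  have [u0x u0B'] := setD1P u0B.
  apply/subsetP=> z zB; case: (eqVneq z x0) => [->|zx]; last first.
    by apply: (subsetP (sub_closure _ _)); rewrite in_setD1 zx.
  apply: closure_force (subsetP (sub_closure _ _) _ u0B) x0B (cliq _ _ u0B' x0B u0x) _.
  by move=> y yB _ yx; apply: (subsetP (sub_closure _ _)); rewrite in_setD1 yx.
apply: leq_Zf => [|S /andP[sSB sBS]]; first by rewrite leq_pred.
rewrite leqNgt; apply/negP => small.
have two_white : 1 < #|B :\: S| by rewrite cardsD (setIidPr sSB); move: small; lia.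
have fixS : force_step e B S = S.
  apply/setP=> z; rewrite inE; case: (boolP (z \in S)) => //= zS; rewrite inE.
  apply/negP=> /andP[_ /exists_inP[u uS /eqP whites]].
  have [y1 [y2 [y1W y2W y12]]] := card_gt1P two_white.
  have whiteE y : y \in B :\: S -> y = z.
    case/setDP=> yB yS; apply/set1P; rewrite -whites !inE yB yS andbT.
    by apply: cliq (subsetP sSB _ uS) yB _; apply: contraNneq yS => <-.
  by rewrite (whiteE _ y1W) (whiteE _ y2W) eqxx in y12.
by have := subset_leq_card sBS; rewrite closure_id //; move: small; lia.
Qed.

Section CliqueBlocks.
Hypothesis cliq : forall B, B \in blocks e -> is_clique e B.

Lemma block_edge B x y : B \in blocks e -> x \in B -> y \in B -> x != y -> e x y.
Proof.
by move=> /cliq/forall_inP cB xB yB; apply/implyP; apply: (forall_inP (cB x xB)).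
Qed.

Definition complete_blocks X := [set B in blocks e | B \subset X].

Lemma in_complete_blocks X B :
  (B \in complete_blocks X) = (B \in blocks e) && (B \subset X).
Proof. by rewrite in_set. Qed.

Lemma forced_block X w : w \in force_step e setT X :\: X ->
  exists2 B, B \in blocks e & (w \in B) && (B :\ w \subset X).
Proof.
case/setDP=> /setUP[-> //|]; rewrite inE => /andP[_ /exists_inP[u uX /eqP white]] wX.
have euw : e u w by have := set11 w; rewrite -white inE => /and3P[].
have [B Bb /andP[uB wB]] := edge_in_block euw.
exists B; rewrite // wB /=; apply/subsetP=> z /setD1P[zw zB].
case: (eqVneq z u) => [->//|zu]; apply: contraR zw => zX.
by apply/eqP/set1P; rewrite -white !inE zX (block_edge Bb uB zB) // eq_sym.
Qed.

(* The new blue vertices w are mapped injectively to newly completed blocks: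
   the block given by forced_block is completed by w, and it contains no
   other new vertex. *)
Lemma card_force_step X :
  #|force_step e setT X| + #|complete_blocks X| <=
  #|X| + #|complete_blocks (force_step e setT X)|.
Proof.
set X' := force_step e setT X; have sXX' : X \subset X' := sub_force_step _ X.
pose g w := odflt set0 [pick B in blocks e | (w \in B) && (B :\ w \subset X)].
have gP w : w \in X' :\: X -> [/\ g w \in blocks e, w \in g w & g w :\ w \subset X].
  case/forced_block=> B Bb /andP[wB sB]; rewrite /g.
  case: pickP => [C /andP[Cb /andP[wC sC]] | none] //=.
  by have := none B; rewrite /= Bb wB sB.
have g_inj : {in X' :\: X &, injective g}.
  move=> w1 w2 w1N w2N gE; have [_ _ s1] := gP _ w1N; have [_ w2g _] := gP _ w2N.
  apply/eqP; apply: contraT => w12; have /setDP[_] := w2N.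
  by rewrite (subsetP s1) // in_setD1 eq_sym w12 gE.
have sF : complete_blocks X \subset complete_blocks X'.
  apply/subsetP=> B; rewrite !in_complete_blocks => /andP[-> sBX].
  exact: subset_trans sBX sXX'.
have new : g @: (X' :\: X) \subset complete_blocks X' :\: complete_blocks X.
  apply/subsetP=> _ /imsetP[w wN ->]; have [gb wg sg] := gP _ wN.
  have /setDP[_ wX] := wN.
  rewrite in_setD !in_complete_blocks gb /=; apply/andP; split.
    by apply: contra wX => /subsetP; apply.
  apply/subsetP=> z zg; case: (eqVneq z w) => [->|zw]; first by case/setDP: wN.
  by apply: (subsetP sXX'); apply: (subsetP sg); rewrite in_setD1 zw.
have := subset_leq_card new; rewrite card_in_imset // !cardsD (setIidPr sXX') (setIidPr sF).
rewrite leq_subLR -(leq_add2r #|complete_blocks X|) -addnA subnK //.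
exact: subset_leq_card.
Qed.

Lemma card_le_zero_forcing_add_blocks S :
  zero_forcing_set e setT S -> #|T| <= #|S| + #|blocks e|.
Proof.
case/andP=> _ sT.
have bound k : #|iter k (force_step e setT) S| <=
               #|S| + #|complete_blocks (iter k (force_step e setT) S)|.
  elim: k => [|k IH] /=; first exact: leq_addr.
  set X := iter k _ S; rewrite -(leq_add2r #|complete_blocks X|).
  by apply: leq_trans (card_force_step X) _; rewrite addnAC leq_add2r.
rewrite -cardsT; apply: leq_trans (subset_leq_card sT) _.
apply: leq_trans (bound #|T|) _; rewrite leq_add2l.
by apply/subset_leq_card/subsetP=> B; rewrite in_complete_blocks => /andP[].
Qed.

Section Rooted.
Variable r : T.
Hypothesis conn : connectedb e setT.
Local Notation dist := (dist r conn).

Definition parent B := odflt r [pick z in B | [forall y in B, dist z <= dist y]].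

Lemma parent_spec B : B \in blocks e ->
  parent B \in B /\ {in B, forall y, dist (parent B) <= dist y}.
Proof.
rewrite inE => /and3P[/set0Pn[x0 x0B] _ _]; rewrite /parent.
case: pickP => [z /andP[zB /forall_inP zmin] //|none].
have [z zB zmin] := @arg_minnP _ x0 (fun z => z \in B) dist x0B.
by have := none z; rewrite zB /=; move/negP; case; apply/forall_inP.
Qed.

(* If x, y were both nearest to r in B, a path from y through r to a
   predecessor x' of x would avoid x, putting x, y, x' in one block, namely B;
   but x' is nearer to r than x. *)
Lemma dist_block_min_uniq B x y : B \in blocks e -> x \in B ->
  {in B, forall z, dist x <= dist z} -> y \in B -> dist y = dist x -> y = x.
Proof.
move=> Bb xB xmin yB dyx; apply/eqP; apply: contraT => yx.
have xr : x != r.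
  apply: contraNneq yx => xr; apply/eqP.
  by rewrite xr; apply: dist_eq0; rewrite dyx xr dist_root.
have [x' ex'x dx'] := dist_pred conn xr.
have yr : y != r by apply: contra_eqN dyx => /eqP->; rewrite dist_root -dx'.
have [y' ey'y dy'] := dist_pred conn yr.
have x'x : dist x' < dist x by rewrite -dx'.
have y'x' : dist y' <= dist x' by rewrite -ltnS dy' dyx -dx'.
have y'x_neq : y' != x by apply: contraTneq y'x' => ->; rewrite -ltnNge.
have yx' : connect (ir (~: [set x])) y x'.
  apply: connect_trans (connect_avoid x'x y'x' (leqnn _)).
  by apply: connect_induced_edge; rewrite 1?esym // !inE.
have yx'_neq : y != x' by apply: contraTneq x'x => <-; rewrite -dyx ltnn.
have exy : e x y by apply: block_edge Bb xB yB _; rewrite eq_sym.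
have exx' : e x x' by rewrite esym.
have [D Db /and3P[xD yD x'D]] := detour_block exy exx' yx'_neq yx'.
have DB : D = B by apply: eq_block_of_common Db Bb _ xD yD xB yB; rewrite eq_sym.
by have := xmin x'; rewrite -DB x'D leqNgt x'x => /(_ isT).
Qed.

Lemma dist_nonparent B z : B \in blocks e -> z \in B -> z != parent B ->
  dist z = (dist (parent B)).+1.
Proof.
move=> Bb zB zp; have [pB pmin] := parent_spec Bb.
have zp_ne : dist z != dist (parent B).
  by apply: contra zp => /eqP dzp; rewrite (dist_block_min_uniq Bb pB pmin zB dzp).
have : dist z <= (dist (parent B)).+1.
  by apply/dist_edge/(block_edge Bb pB zB); rewrite eq_sym.
by have := pmin z zB; lia.
Qed.

Lemma nonparent_block_uniq B C v : B \in blocks e -> C \in blocks e ->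
  v \in B -> v \in C -> v != parent B -> v != parent C -> B = C.
Proof.
move=> Bb Cb vB vC vpB vpC; have [pB _] := parent_spec Bb; have [pC _] := parent_spec Cb.
have [pE|pBC] := eqVneq (parent B) (parent C).
  by apply: eq_block_of_common Bb Cb vpB vB pB vC _; rewrite pE.
have dvB := dist_nonparent Bb vB vpB; have dvC := dist_nonparent Cb vC vpC.
have k_v : dist (parent B) < dist v by rewrite dvB.
have dpC : dist (parent C) <= dist (parent B) by move: dvC; rewrite dvB => -[->].
have [D Db /and3P[vD pBD pCD]] := detour_block (block_edge Bb vB pB vpB)
  (block_edge Cb vC pC vpC) pBC (connect_avoid k_v (leqnn _) dpC).
rewrite -(eq_block_of_common Db Bb vpB vD pBD vB pB).
exact: eq_block_of_common Db Cb vpC vD pCD vC pC.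
Qed.

Section WhiteVertices.
Hypothesis eirr : irreflexive e.
Hypothesis big_blocks : forall B, B \in blocks e -> 2 < #|B|.

Definition white B := odflt r [pick z in B | z != parent B].
Definition forcer B := odflt r [pick z in B | (z != parent B) && (z != white B)].

Lemma white_spec B : B \in blocks e -> white B \in B /\ white B != parent B.
Proof.
move=> Bb; rewrite /white; case: pickP => [z /andP[]//|none] /=.
have : B \subset [set parent B].
  by apply/subsetP=> z zB; have := none z; rewrite zB inE => /negbFE.
by move/subset_leq_card; rewrite cards1 leqNgt (ltnW (big_blocks Bb)).
Qed.

Lemma forcer_spec B : B \in blocks e ->
  [/\ forcer B \in B, forcer B != parent B & forcer B != white B].
Proof.
move=> Bb; rewrite /forcer; case: pickP => [z /and3P[]//|none] /=.
have : B \subset [set parent B; white B].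
  apply/subsetP=> z zB; have := none z; rewrite zB !inE /= => /negbT.
  by rewrite negb_and !negbK.
by move/subset_leq_card; rewrite cards2 => /(leq_trans (big_blocks Bb)); case: (_ != _).
Qed.

Local Notation nonwhite := (~: (white @: blocks e)).
Local Notation blue := (Defs.closure e setT nonwhite).

Lemma card_nonwhite : #|nonwhite| + #|blocks e| = #|T|.
Proof.
have white_inj : {in blocks e &, injective white}.
  move=> B C Bb Cb wBC; have [wB wpB] := white_spec Bb; have [wC wpC] := white_spec Cb.
  by apply: nonparent_block_uniq Bb Cb wB _ wpB _; rewrite wBC.
by rewrite -(card_in_imset white_inj) addnC cardsC.
Qed.

Lemma nonwhite_blue B y : B \in blocks e -> y \in B -> y != parent B -> y != white B ->
  y \in blue.
Proof.
move=> Bb yB ypB ywB; apply: (subsetP (sub_closure _ _)); rewrite inE.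
apply/imsetP=> -[C Cb yE]; have [wC wpC] := white_spec Cb; rewrite -yE in wC wpC.
by move: ywB; rewrite (nonparent_block_uniq Bb Cb yB wC ypB wpC) yE eqxx.
Qed.

(* Downward induction on the depth of B: the forcer of B sees, besides white B,
   vertices of B and vertices of blocks whose parent it is. *)
Lemma white_blue_of_parent B : B \in blocks e -> parent B \in blue -> white B \in blue.
Proof.
pose depth C := \max_(D in blocks e) dist (parent D) - dist (parent C).
suff: forall n B, depth B = n -> B \in blocks e -> parent B \in blue -> white B \in blue.
  exact.
elim/ltn_ind=> n IH {}B dB Bb pX.
have [fB fpB fwB] := forcer_spec Bb; have [wB wpB] := white_spec Bb.
have fX := nonwhite_blue Bb fB fpB fwB.
apply: (closure_force fX (in_setT _) (block_edge Bb fB wB fwB)) => y _ efy yw.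
have [D Db /andP[fD yD]] := edge_in_block efy.
have [DB|DB] := eqVneq D B.
  rewrite DB in yD; have [->//|ypB] := eqVneq y (parent B).
  exact: nonwhite_blue Bb yD ypB yw.
have fpD : forcer B = parent D.
  apply/eqP; apply: contraNT DB => fpD.
  by rewrite (nonparent_block_uniq Db Bb fD fB fpD fpB).
have ypD : y != parent D by rewrite -fpD; apply: contraTneq efy => ->; rewrite eirr.
have [ywD|ywD] := eqVneq y (white D); last exact: nonwhite_blue Db yD ypD ywD.
rewrite ywD; apply: (IH (depth D)) => //; last by rewrite -fpD.
have := @leq_bigmax_cond _ (fun C => C \in blocks e) (fun C => dist (parent C)) D Db.
by rewrite -dB /depth -fpD (dist_nonparent Bb fB fpB) subnS ltn_predL subn_gt0.
Qed.

Lemma nonwhite_zero_forcing : zero_forcing_set e setT nonwhite.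
Proof.
rewrite /zero_forcing_set subsetT /=; apply/subsetP=> v _.
move: {2}(dist v) (erefl (dist v)) => n; elim/ltn_ind: n v => n IH v dv.
case: (boolP (v \in white @: blocks e)) => [/imsetP[B Bb vE]|vW]; last first.
  by apply: (subsetP (sub_closure _ _)); rewrite inE.
subst v; have [wB wpB] := white_spec Bb.
have pBn : dist (parent B) < n by rewrite -dv (dist_nonparent Bb wB wpB).
exact: white_blue_of_parent Bb (IH _ pBn _ erefl).
Qed.

Lemma Zf_add_blocks_le : Zf e setT + #|blocks e| <= #|T|.
Proof. by rewrite -card_nonwhite leq_add2r Zf_min // nonwhite_zero_forcing. Qed.

End WhiteVertices.

End Rooted.

End CliqueBlocks.

Lemma Zf_le_card U : Zf e U <= #|U|.
Proof. by rewrite /Zf -minEnat; apply: (@bigmin_le_id _ nat). Qed.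

Lemma sum_card_blocks : \sum_(B in blocks e) #|B| = \sum_v block_index e v.
Proof.
under eq_bigr => B _ do rewrite -sum1_card.
rewrite (exchange_big_dep predT) //=; apply: eq_bigr => v _.
by rewrite /block_index -sum1_card; apply: eq_bigl => B; rewrite !inE.
Qed.

Lemma sum_Zf_blocks : (forall B, B \in blocks e -> is_clique e B) ->
  (forall B, B \in blocks e -> 1 < #|B|) ->
  \sum_(B in blocks e) Zf e B + #|blocks e| = \sum_v block_index e v.
Proof.
move=> cliq two; rewrite -sum_card_blocks -sum1_card -big_split /=.
by apply: eq_bigr => B Bb; rewrite Zf_clique ?cliq ?two // addn1 prednK // ltnW ?two.
Qed.

Lemma Zf_clique_tree : irreflexive e -> clique_tree e ->
  (forall B, B \in blocks e -> 2 < #|B|) -> Zf e setT + #|blocks e| = #|T|.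
Proof.
move=> eirr [conn cliq] big_blocks; apply/eqP; rewrite eqn_leq; apply/andP; split.
  case: (set_0Vmem (blocks e)) => [->|[B0 B0b]].
    by rewrite cards0 addn0 -cardsT Zf_le_card.
  have [r _] : exists r, r \in B0 by move: B0b; rewrite inE => /and3P[/set0Pn].
  exact: Zf_add_blocks_le cliq r conn eirr big_blocks.
rewrite addnC -leq_subLR; apply: leq_Zf => [|S zS]; first by rewrite cardsT leq_subr.
by rewrite leq_subLR addnC card_le_zero_forcing_add_blocks.
Qed.

End SimpleGraph.

Local Open Scope ring_scope.

Theorem theorem2p6 (T : finType) (e : rel T)
  (esym : symmetric e) (eirr : irreflexive e)
  (ct : clique_tree e)
  (big_blocks : forall B, B \in blocks e -> (3 <= #|B|)%N) :
  (Zf e setT)%:Z =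
    \sum_(B in blocks e) (Zf e B)%:Z
    - \sum_(v : T) ((block_index e v)%:Z - 1).
Proof.
have Zn := Zf_clique_tree esym eirr ct big_blocks.
have Zb := sum_Zf_blocks (proj2 ct) (fun B Bb => ltnW (big_blocks B Bb)).
have sumz (I : finType) (P : pred I) (F : I -> nat) :
    \sum_(i | P i) (F i)%:Z = (\sum_(i | P i) F i)%:Z.
  by rewrite (big_morph Posz PoszD (erefl 0%:Z)).
by rewrite sumrB sumr_const !sumz natz -Zn -Zb !PoszD; lia.
Qed.
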